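(* For every $\epsilon>0$ there is a constant $C(\epsilon)>0$ such that $R_4(n)\le C(\epsilon)\, n^{1/2+\epsilon}$ for all positive integers $n$.
   Context: For a positive integer $n$, $R_4(n)$ denotes the number of ordered quadruples $(x,y,z,w)$ of positive integers with $n = xyzw + x + y + z + w$. *)

From Stdlib Require Import Reals Arith List.
Import ListNotations.

Definition rng (n : nat) : list nat := seq 1 n.

(* R4 n = #{(x,y,z,w) positive integers | n = xyzw + x + y + z + w}.
   Any such solution has x,y,z,w <= n, so enumerating over [1..n]^4
   counts all of them. *)
Definition R4 (n : nat) : nat :=
  length
    (filter
       (fun q : nat * nat * nat * nat =>
          let '(x, y, z, w) := q in
          Nat.eqb n (x * y * z * w + x + y + z + w))
       (list_prod (list_prod (list_prod (rng n) (rng n)) (rng n)) (rng n))).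

(* If [n = xyzw + x + y + z + w] then [(xyz + 1)(xyw + 1) = xy(n - x - y) + 1], so for
   fixed [(x, y)] the solution is determined by the divisor [xyz + 1] of that number.
   As [xy * zw < n], one of [xy], [zw] is at most [s = √n], and the pairs with [xy = k]
   are counted by the divisors of [k]; hence
   [R4 n <= 2 s * max_(k <= s) d(k) * max_(m <= s n + 1) d(m)].
   The divisor bound [d(N)^K <= (K^K)^(2^K) N] (multiplicativity of [d], and
   [(a+1)^K <= p^a] for [p >= 2^K] while [(a+1)^K <= K^K p^a] in general) then gives
   [R4 n ^ (2K) <= A n^(K+4)], i.e. [R4 n = O(n^(1/2 + 2/K))]. *)

From Stdlib Require Import Reals Lra Lia.
From mathcomp Require all_boot zify.
Open Scope R_scope.

Module DivisorCounting.
Import all_boot zify.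
Set Implicit Arguments. Unset Strict Implicit.
Local Open Scope nat_scope.

Lemma count_leq_size_inj (T1 T2 : eqType) (P : pred T1) (g : T1 -> T2) s t :
  uniq s -> {in [pred x in s | P x] &, injective g} ->
  {in s, forall x, P x -> g x \in t} ->
  count P s <= size t.
Proof.
move=> s_uniq g_inj g_t; rewrite -size_filter -(size_map g).
apply: uniq_leq_size.
  rewrite map_inj_in_uniq ?filter_uniq // => x y.
  rewrite !mem_filter => /andP[Px xs] /andP[Py ys]; apply: g_inj; by rewrite inE ?Px ?Py ?xs ?ys.
by move=> z /mapP[x]; rewrite mem_filter => /andP[Px xs] ->; exact: g_t.
Qed.

Definition ndivisors n := size (divisors n).

Lemma dvdn_coprime_gcdM d m n : coprime m n -> d %| m * n -> d = gcdn d m * gcdn d n.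
Proof.
move=> co_mn d_mn; apply/eqP; rewrite eqn_dvd; apply/andP; split.
  rewrite muln_gcdl [m * gcdn d n]muln_gcdr !dvdn_gcd d_mn dvdn_mulr ?dvdn_mull //.
rewrite Gauss_dvd ?dvdn_gcdl //.
exact: coprime_dvdl (dvdn_gcdr d m) (coprime_dvdr (dvdn_gcdr d n) co_mn).
Qed.

Lemma ndivisorsM m n : 0 < m -> 0 < n -> coprime m n ->
  ndivisors (m * n) <= ndivisors m * ndivisors n.
Proof.
move=> m_gt0 n_gt0 co_mn; have mn_gt0 : 0 < m * n by rewrite muln_gt0 m_gt0.
rewrite /ndivisors -(count_predT (divisors _)) -(size_allpairs pair).
apply: (count_leq_size_inj (g := fun d => (gcdn d m, gcdn d n))) (divisors_uniq _) _ _.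
  move=> d e; rewrite !inE !andbT -!dvdn_divisors // => d_mn e_mn /= [dm dn].
  by rewrite (dvdn_coprime_gcdM co_mn d_mn) (dvdn_coprime_gcdM co_mn e_mn) dm dn.
move=> d; rewrite -dvdn_divisors // => _ _.
by apply: allpairs_f; rewrite -dvdn_divisors ?dvdn_gcdr.
Qed.

Lemma ndivisors_pfactor p a : prime p -> ndivisors (p ^ a) <= a.+1.
Proof.
move=> p_pr; rewrite -[a.+1](size_iota 0) -(size_map (expn p)).
apply: uniq_leq_size (divisors_uniq _) _ => d.
rewrite -dvdn_divisors ?expn_gt0 ?prime_gt0 // => /(dvdn_pfactor _ _ p_pr)[e le_ea ->].
by apply: map_f; rewrite mem_iota; lia.
Qed.

Lemma leq_expn2r m n e : m <= n -> m ^ e <= n ^ e.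
Proof. by move=> le_mn; elim: e => // e IHe; rewrite !expnS leq_mul. Qed.

Lemma succn_expn_leq K p a : 0 < K -> 1 < p ->
  a.+1 ^ K <= (K ^ K) ^ (p < 2 ^ K) * p ^ a.
Proof.
move=> K_gt0 p_gt1; case: ltnP => /= [_ | le_2K_p]; last first.
  rewrite mul1n; apply: leq_trans (leq_expn2r K (ltn_expl a (isT : 1 < 2))) _.
  by rewrite -expnM mulnC expnM leq_expn2r.
set t := a %/ K; rewrite expn1.
have le_a_K2t : a.+1 <= K * 2 ^ t.
  have := divn_eq a K; have := ltn_pmod a K_gt0; have := ltn_expl t (isT : 1 < 2).
  by rewrite -/t; nia.
apply: leq_trans (leq_expn2r K le_a_K2t) _.
rewrite expnMn -expnM leq_mul // (@leq_trans (2 ^ a)) ?leq_expn2r ?leq_pexp2l //.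
by rewrite /t leq_divM.
Qed.

(* Only the prime factors below [2 ^ K] cost a factor [K ^ K]; [j] is a lower bound
   for the prime factors of [N], so at most [2 ^ K - j] of them are that small. *)
Lemma ndivisors_expn_leq_aux K N j : 0 < K -> 0 < N ->
    (forall q, prime q -> q %| N -> j <= q) ->
  ndivisors N ^ K <= (K ^ K) ^ (2 ^ K - j) * N.
Proof.
move=> K_gt0; set c := K ^ K; have c_gt0 : 0 < c by rewrite expn_gt0 K_gt0.
elim/ltn_ind: N j => N IHN j N_gt0 j_le_primes.
have [le_N1 | N_gt1] := leqP N 1.
  have -> : N = 1 by lia.
  by rewrite [ndivisors 1]/= exp1n muln1 expn_gt0 c_gt0.
set p := pdiv N; have p_pr : prime p by apply: pdiv_prime.
have p_gt1 := prime_gt1 p_pr.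
have [M co_pM defN] := pfactor_coprime p_pr N_gt0; set a := logn p N in defN.
have a_gt0 : 0 < a by rewrite logn_gt0 mem_primes p_pr N_gt0 pdiv_dvd.
have M_gt0 : 0 < M by move: N_gt0; rewrite defN muln_gt0 => /andP[].
have lt_MN : M < N.
  by rewrite defN -{1}(muln1 M) ltn_pmul2l // -(exp1n a) ltn_exp2r.
have M_primes : forall q, prime q -> q %| M -> p.+1 <= q.
  move=> q q_pr q_M; have q_N : q %| N by rewrite defN dvdn_mulr.
  rewrite ltn_neqAle pdiv_min_dvd ?prime_gt1 // andbT.
  by apply: contraTneq q_M => <-; rewrite -prime_coprime // coprime_sym.
have le_ndivN : ndivisors N <= ndivisors M * a.+1.
  rewrite defN; apply: leq_trans (ndivisorsM _ _ _) _ => //.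
  - by rewrite expn_gt0 prime_gt0.
  - by rewrite coprime_sym coprimeXl.
  - by rewrite leq_mul // ndivisors_pfactor.
apply: leq_trans (leq_expn2r K le_ndivN) _; rewrite expnMn.
apply: leq_trans (leq_mul (IHN M lt_MN p.+1 M_gt0 M_primes) (succn_expn_leq a K_gt0 p_gt1)) _.
rewrite -/c defN mulnAC mulnA -expnD -mulnA [_ * M]mulnC leq_mul // leq_pexp2l //.
have := j_le_primes p p_pr (pdiv_dvd N); case: ltnP => /=; lia.
Qed.

Lemma ndivisors_expn_leq K N : 0 < K -> 0 < N ->
  ndivisors N ^ K <= (K ^ K) ^ (2 ^ K) * N.
Proof.
move=> K_gt0 N_gt0.
by have := ndivisors_expn_leq_aux K_gt0 N_gt0 (j := 0) (fun _ _ _ => leq0n _); rewrite subn0.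
Qed.

Definition maxdiv M := \max_(i < M.+1) ndivisors i.

Lemma leq_maxdiv i M : i <= M -> ndivisors i <= maxdiv M.
Proof. by move=> le_iM; exact: (leq_bigmax (@Ordinal M.+1 i le_iM)). Qed.

Lemma maxdiv_expn_leq K M : 0 < K -> 0 < M -> maxdiv M ^ K <= (K ^ K) ^ (2 ^ K) * M.
Proof.
move=> K_gt0 M_gt0; have card_gt0 : 0 < #|'I_M.+1| by rewrite card_ord.
rewrite /maxdiv; have [[[|i] le_iM] ->] := eq_bigmax (fun j : 'I_M.+1 => ndivisors j) card_gt0.
  (* [divisors 0] is the junk value [[:: 1]]. *)
  by rewrite [ndivisors 0]/= exp1n muln_gt0 !expn_gt0 K_gt0.
by apply: leq_trans (ndivisors_expn_leq K_gt0 (ltn0Sn i)) _; rewrite leq_mul.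
Qed.

Lemma sumn_map_leq (T : eqType) (f : T -> nat) b r :
  {in r, forall x, f x <= b} -> sumn (map f r) <= size r * b.
Proof.
elim: r => //= x r IHr f_le; rewrite mulSn leq_add ?f_le ?mem_head //.
by apply: IHr => y y_r; apply: f_le; rewrite inE y_r orbT.
Qed.

Lemma mem_allpairs_pair (S T : eqType) (s : seq S) (t : seq T) x y :
  ((x, y) \in [seq (x, y) | x <- s, y <- t]) = (x \in s) && (y \in t).
Proof.
apply/allpairsP/andP => [[[x' y'] [x's y't [-> ->]]] | [x_s y_t]] //.
by exists (x, y).
Qed.

Lemma allpairs_pair_uniq (S T : eqType) (s : seq S) (t : seq T) :
  uniq s -> uniq t -> uniq [seq (x, y) | x <- s, y <- t].
Proof. by move=> s_uniq t_uniq; apply: allpairs_uniq => // -[? ?] [? ?]. Qed.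

Definition quad := (nat * nat * nat * nat)%type.

Definition sol n (q : quad) : bool :=
  let '(x, y, z, w) := q in
  [&& 0 < x, 0 < y, 0 < z, 0 < w & n == x * y * z * w + x + y + z + w].

Definition small s (q : quad) : bool := let '(x, y, _, _) := q in x * y <= s.

Definition swap_pairs (q : quad) : quad := let '(x, y, z, w) := q in (z, w, x, y).

Lemma swap_pairsK : involutive swap_pairs.
Proof. by case=> [[[x y] z] w]. Qed.

Lemma sol_swap_pairs n q : sol n (swap_pairs q) = sol n q.
Proof.
case: q => [[[x y] z] w] /=.
rewrite (_ : z * w * x * y + z + w + x + y = x * y * z * w + x + y + z + w); last by lia.
by case: (0 < x); case: (0 < y); case: (0 < z); case: (0 < w).
Qed.

Lemma sol_small n s q : n < s.+1 * s.+1 -> sol n q -> small s q || small s (swap_pairs q).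
Proof.
case: q => [[[x y] z] w] /= lt_n /and5P[_ _ _ _ /eqP def_n].
by case: leqP => //= lt_s_xy; apply: contraLR lt_n; rewrite -!ltnNge => lt_s_zw; nia.
Qed.

Lemma sol_factor n x y z w : sol n (x, y, z, w) ->
  (x * y * z + 1) * (x * y * w + 1) = x * y * (n - x - y) + 1.
Proof.
case/and5P=> _ _ _ _ /eqP ->.
rewrite (_ : x * y * z * w + x + y + z + w - x - y = x * y * z * w + z + w); last by lia.
nia.
Qed.

(* A solution [(x, y, z, w)] with [xy <= s] is recovered from [((x, xy), xyz + 1)]. *)
Definition sol_keys n s : seq (nat * nat * nat) :=
  [seq (dk, e) | dk <- [seq (d, k) | k <- iota 1 s, d <- divisors k],
                 e <- divisors (dk.2 * (n - dk.1 - dk.2 %/ dk.1) + 1)].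

Lemma size_sol_keys n s : size (sol_keys n s) <= s * maxdiv s * maxdiv (s * n + 1).
Proof.
have mem_dk d k : (d, k) \in [seq (d, k) | k <- iota 1 s, d <- divisors k] -> k <= s.
  by case/allpairsPdep=> k' [d' [k's _ [_ ->]]]; move: k's; rewrite mem_iota; lia.
rewrite size_allpairs_dep; apply: leq_trans (sumn_map_leq (b := maxdiv (s * n + 1)) _) _.
  move=> [d k] /mem_dk le_ks; apply: leq_maxdiv => /=.
  by rewrite leq_add2r leq_mul // (leq_trans (leq_subr _ _) (leq_subr _ _)).
rewrite leq_mul2r size_allpairs_dep; apply/orP; right.
apply: leq_trans (sumn_map_leq (b := maxdiv s) _) _.
  by move=> k; rewrite mem_iota => k_s; apply: leq_maxdiv; lia.
by rewrite size_iota.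
Qed.

Lemma count_sol_small n s (Q : seq quad) :
  uniq Q -> count (predI (sol n) (small s)) Q <= size (sol_keys n s).
Proof.
move=> Q_uniq.
apply: (count_leq_size_inj (g := fun q => let '(x, y, z, _) := q in (x, x * y, x * y * z + 1)))
  Q_uniq _ _.
  move=> [[[x1 y1] z1] w1] [[[x2 y2] z2] w2]; rewrite !inE /=.
  case/and3P=> _ /and5P[x1_gt0 y1_gt0 z1_gt0 w1_gt0 /eqP def_n1] _.
  case/and3P=> _ /and5P[x2_gt0 y2_gt0 z2_gt0 w2_gt0 /eqP def_n2] _.
  case=> eq_x eq_xy eq_xyz; subst x2.
  have eq_y : y1 = y2 by apply/eqP; rewrite -(eqn_pmul2l x1_gt0) eq_xy.
  subst y2; have xy_gt0 : 0 < x1 * y1 by rewrite muln_gt0 x1_gt0.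
  have eq_z : z1 = z2 by apply/eqP; rewrite -(eqn_pmul2l xy_gt0); lia.
  subst z2; congr (_, _); nia.
move=> [[[x y] z] w] _ /andP[sol_q small_q] /=.
have /and5P[x_gt0 y_gt0 _ _ _] := sol_q; have xy_gt0 : 0 < x * y by rewrite muln_gt0 x_gt0.
apply/allpairsPdep; exists (x, x * y), (x * y * z + 1); split => //.
  apply/allpairsPdep; exists (x * y), x; split => //.
    by rewrite mem_iota; move: small_q => /=; lia.
  by rewrite -dvdn_divisors // dvdn_mulr.
rewrite /= mulKn // -dvdn_divisors ?addn_gt0 ?orbT //.
by apply/dvdnP; exists (x * y * w + 1); rewrite -(sol_factor sol_q) mulnC.
Qed.

Lemma count_sol_leq n s (Q : seq quad) : n < s.+1 * s.+1 -> uniq Q ->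
  count (sol n) Q <= 2 * size (sol_keys n s).
Proof.
move=> lt_n Q_uniq.
set S := predI (sol n) (small s); set S' := predI (sol n) (small s \o swap_pairs).
have swapQ_uniq : uniq (map swap_pairs Q).
  by rewrite map_inj_uniq //; exact: inv_inj swap_pairsK.
have count_S' : count S' Q = count S (map swap_pairs Q).
  by rewrite count_map; apply: eq_count => q /=; rewrite sol_swap_pairs.
apply: leq_trans (sub_count (a2 := predU S S') _ _) _.
  by move=> q /= sol_q; rewrite sol_q /=; exact: sol_small lt_n sol_q.
apply: leq_trans (leq_addr (count (predI S S') Q) _) _.
by rewrite count_predUI count_S' mul2n -addnn leq_add ?count_sol_small.
Qed.

Definition quads n : seq quad :=
  [seq (xyz, w) | xyz <- [seq (xy, z) | xy <- [seq (x, y) | x <- iota 1 n, y <- iota 1 n],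
                                        z <- iota 1 n],
                  w <- iota 1 n].

Lemma quads_uniq n : uniq (quads n).
Proof. by rewrite !allpairs_pair_uniq ?iota_uniq. Qed.

Lemma list_prod_allpairs (S T : Type) (s : list S) (t : list T) :
  List.list_prod s t = [seq (x, y) | x <- s, y <- t].
Proof.
elim: s => //= x s <-.
have -> : List.map (pair x) t = map (pair x) t by elim: t => //= y t ->.
by [].
Qed.

Lemma List_seq_iota m n : List.seq m n = iota m n.
Proof. by elim: n m => //= n IHn m; rewrite IHn. Qed.

Lemma length_List_filter (T : Type) (p : pred T) (s : list T) :
  length (List.filter p s) = count p s.
Proof. by elim: s => //= x s IHs; case: (p x); rewrite /= IHs. Qed.

Lemma Nat_eqbE m n : Nat.eqb m n = (m == n).
Proof. by apply/idP/eqP => /Nat.eqb_spec. Qed.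

Lemma R4E n : R4 n = count (sol n) (quads n).
Proof.
rewrite /R4 /rng List_seq_iota !list_prod_allpairs length_List_filter.
apply: eq_in_count => -[[[x y] z] w].
rewrite !mem_allpairs_pair !mem_iota Nat_eqbE /=.
by case/and3P=> /and3P[/and3P[/andP[-> _] -> _] -> _] -> _.
Qed.

Lemma R4_expn_leq K : 0 < K ->
  exists A, 0 < A /\ forall n, 0 < n -> R4 n ^ (2 * K) <= A * n ^ (K + 4).
Proof.
move=> K_gt0; set c := (K ^ K) ^ (2 ^ K).
exists (4 ^ K.+1 * c ^ 4); split; first by rewrite muln_gt0 !expn_gt0 K_gt0.
move=> n n_gt0; set s := Nat.sqrt n.
have /andP[le_ss_n lt_n_ss] : s * s <= n < s.+1 * s.+1 by have := Nat.sqrt_spec n; lia.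
have s_gt0 : 0 < s by nia.
set E := maxdiv s; set D := maxdiv (s * n + 1).
have le_R4 : R4 n <= 2 * (s * E * D).
  rewrite R4E; apply: leq_trans (count_sol_leq lt_n_ss (quads_uniq n)) _.
  by rewrite leq_mul2l size_sol_keys orbT.
have le_EK : E ^ K <= c * s by apply: maxdiv_expn_leq.
have le_DK : D ^ K <= c * (s * n + 1) by apply: maxdiv_expn_leq; rewrite ?addn_gt0 ?orbT.
have le_sK : (s * s) ^ K <= n ^ K by apply: leq_expn2r.
have le_EK2 : (E ^ K) ^ 2 <= c ^ 2 * n.
  by apply: leq_trans (leq_expn2r 2 le_EK) _; rewrite expnMn leq_mul // mulnn.
have le_DK2 : (D ^ K) ^ 2 <= c ^ 2 * (4 * n ^ 3).
  apply: leq_trans (leq_expn2r 2 le_DK) _; rewrite expnMn leq_mul //.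
  apply: leq_trans (leq_expn2r 2 (_ : s * n + 1 <= 2 * s * n)) _; first by nia.
  by rewrite !expnS expn0; nia.
apply: leq_trans (leq_expn2r (2 * K) le_R4) _.
have -> : (2 * (s * E * D)) ^ (2 * K) = 4 ^ K * (s * s) ^ K * (E ^ K) ^ 2 * (D ^ K) ^ 2.
  rewrite expnM -[(E ^ K) ^ 2]expnM -[(D ^ K) ^ 2]expnM !(mulnC K 2) !expnM -!expnMn.
  by congr (_ ^ K); rewrite !expnS expn0; nia.
apply: leq_trans (leq_mul (leq_mul (leq_mul (leqnn _) le_sK) le_EK2) le_DK2) _.
by rewrite expnD !expnS expn0; nia.
Qed.

Lemma expn_Nat_pow m k : m ^ k = Nat.pow m k.
Proof. by elim: k => // k IHk; rewrite expnS IHk. Qed.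

Lemma R4_pow_le K : (0 < K)%coq_nat -> exists A, (0 < A)%coq_nat /\
  forall n, (0 < n)%coq_nat -> (Nat.pow (R4 n) (2 * K) <= A * Nat.pow n (K + 4))%coq_nat.
Proof.
move=> /ltP K_gt0; have [A [A_gt0 le_R4]] := R4_expn_leq K_gt0.
exists A; split=> [|n /ltP n_gt0]; first exact/ltP.
by apply/leP; rewrite -!expn_Nat_pow le_R4.
Qed.
End DivisorCounting.

Lemma le_Rpower_of_pow_le (r A m p : R) (k e : nat) :
  (0 < k)%nat -> 0 < A -> 0 <= r -> 1 <= m -> INR e / INR k <= p ->
  r ^ k <= A * m ^ e -> r <= Rpower A (/ INR k) * Rpower m p.
Proof.
  intros Hk HA Hr Hm Hp Hpow.
  assert (Hk' : 0 < INR k) by (apply lt_0_INR; exact Hk).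
  destruct (Rle_lt_or_eq_dec 0 r Hr) as [Hr0 | <-].
  2: { apply Rmult_le_pos; left; apply exp_pos. }
  assert (Hroot : r = Rpower (r ^ k) (/ INR k)).
  { rewrite <- Rpower_pow, Rpower_mult, Rinv_r, Rpower_1 by lra. reflexivity. }
  rewrite Hroot.
  apply Rle_trans with (Rpower (A * m ^ e) (/ INR k)).
  { apply Rle_Rpower_l; [left; apply Rinv_0_lt_compat; exact Hk'|].
    split; [apply pow_lt; exact Hr0 | exact Hpow]. }
  rewrite <- Rpower_mult_distr by (try apply pow_lt; lra).
  apply Rmult_le_compat_l; [left; apply exp_pos|].
  rewrite <- Rpower_pow, Rpower_mult by lra.
  apply Rle_Rpower; [exact Hm | exact Hp].
Qed.

Theorem theorem5 :
  forall eps : R, 0 < eps ->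
  exists C : R, 0 < C /\
    forall n : nat, (1 <= n)%nat ->
      INR (R4 n) <= C * Rpower (INR n) (1/2 + eps).
Proof.
  intros eps Heps.
  destruct (archimed_cor1 (eps / 2)) as [K [HK K_pos]]; [lra|].
  destruct (DivisorCounting.R4_pow_le K_pos) as [A [HA Hbound]].
  exists (Rpower (INR A) (/ INR (2 * K))); split; [apply exp_pos|].
  intros n Hn.
  apply le_Rpower_of_pow_le with (e := (K + 4)%nat);
    [lia | apply lt_0_INR; exact HA | apply pos_INR | apply (le_INR 1); exact Hn | |].
  2: { rewrite <- !pow_INR, <- mult_INR. apply le_INR, Hbound. exact Hn. }
  assert (HKr : 0 < INR K) by (apply lt_0_INR; exact K_pos).
  rewrite plus_INR, mult_INR.
  replace (INR 2) with 2 by reflexivity. replace (INR 4) with 4 by (simpl; lra).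
  replace ((INR K + 4) / (2 * INR K)) with (1 / 2 + 2 * / INR K) by (field; lra).
  lra.
Qed.
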